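(* For a random set of $n$ source symbols and a corresponding regular IBLT with $m$ coded symbols, the probability that the peeling decoder can recover at least one source symbol decreases exponentially in $n/m$.
   Context: A regular IBLT with parameters $m,k$ consists of $m$ coded symbols; each source symbol is mapped to $k$ of the $m$ coded symbols chosen uniformly at random (independently for different source symbols). The peeling decoder repeatedly finds a pure coded symbol (one with exactly one not-yet-recovered source symbol mapped to it), recovers that source symbol, and removes it from all coded symbols it is mapped to, stopping when no pure coded symbol remains; in particular it recovers nothing if initially no coded symbol is pure. *)

From HB Require Import structures.
From mathcomp Require Import all_boot all_order all_algebra.
From mathcomp Require Import all_classical all_reals all_analysis.
Set Implicit Arguments. Unset Strict Implicit. Unset Printing Implicit Defensive.

(* A regular IBLT with parameters m, k on n source symbols (indexed by 'I_n):
   a mapping [A : {ffun 'I_n -> {set 'I_m}}] giving, for each source symbol,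
   the set of coded symbols it is mapped to. *)
Definition iblt_valid (n m k : nat) (A : {ffun 'I_n -> {set 'I_m}}) : bool :=
  [forall i, #|A i| == k].

Definition remaining (n m : nat) (A : {ffun 'I_n -> {set 'I_m}})
  (R : {set 'I_n}) (j : 'I_m) : {set 'I_n} :=
  [set i | (i \notin R) && (j \in A i)].

Definition pure (n m : nat) (A : {ffun 'I_n -> {set 'I_m}})
  (R : {set 'I_n}) (j : 'I_m) : bool :=
  #|remaining A R j| == 1.

Definition peel_step (n m : nat) (A : {ffun 'I_n -> {set 'I_m}})
  (R : {set 'I_n}) : {set 'I_n} :=
  match [pick j | pure A R j] with
  | Some j => R :|: remaining A R j
  | None => R
  end.

(* the peeling decoder: at most n recoveries are possible, so n steps suffice
   to reach the point where no pure coded symbol remains *)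
Definition peel_recovered (n m : nat) (A : {ffun 'I_n -> {set 'I_m}}) : {set 'I_n} :=
  iter n (peel_step A) finset.set0.

(* Probability (uniform over all valid mappings, i.e. each source symbol's
   k coded symbols chosen uniformly at random, independently) that the
   peeling decoder recovers at least one source symbol. *)
Definition prob_recover_some (R : realType) (n m k : nat) : R :=
  (#|[set A : {ffun 'I_n -> {set 'I_m}} |
        iblt_valid k A && (peel_recovered A != finset.set0)]|%:R /
   #|[set A : {ffun 'I_n -> {set 'I_m}} | iblt_valid k A]|%:R)%R.

From HB Require Import structures.
From mathcomp Require Import all_boot all_order all_algebra.
From mathcomp Require Import all_classical all_reals all_analysis.
From mathcomp Require Import ring.
Import Order.TTheory GRing.Theory Num.Theory.

Set Implicit Arguments.
Unset Strict Implicit.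
Unset Printing Implicit Defensive.

(* If peeling recovers anything, some coded symbol j is pure at the start, with
   a single source symbol i mapped to it.  For a fixed pair (j, i) this puts j
   in the k-set of i and outside the k-sets of the other n - 1 source symbols,
   an event of probability (k/m) (1 - k/m)^(n-1), because a uniform k-subset of
   m elements avoids a given one with probability C(m-1,k)/C(m,k) = 1 - k/m.
   A union bound over the m n pairs and 1 - x <= exp(-x) finish the proof. *)

Lemma card_ffun_family (aT rT : finType) (F : aT -> {set rT}) :
  #|[set f : {ffun aT -> rT} | [forall x, f x \in F x]]| = \prod_x #|F x|.
Proof.
rewrite -(big_image _ _ _ _ id) -foldrE -card_family; apply: eq_card => f.
by rewrite inE; apply/forallP/familyP.
Qed.

Lemma leq_card_bigcup (I T : finType) (F : I -> {set T}) :
  #|\bigcup_i F i| <= \sum_i #|F i|.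
Proof.
elim/big_rec2: _ => [|i s U _ leUs]; first by rewrite cards0.
by rewrite (leq_trans (leq_card_setU _ _)) ?leq_add2l.
Qed.

Lemma card_ksets_notin (T : finType) (x : T) k :
  #|[set S : {set T} | (#|S| == k) && (x \notin S)]| = 'C(#|T|.-1, k).
Proof.
rewrite -(cardsC1 x) -cards_draws; apply: eq_card => S.
by rewrite !inE andbC finset.subsets_disjoint finset.setCK disjoint_sym disjoints1.
Qed.

Lemma card_ksets_in (T : finType) (x : T) k :
  #|[set S : {set T} | (#|S| == k) && (x \in S)]| = 'C(#|T|, k) - 'C(#|T|.-1, k).
Proof.
rewrite -card_draws -(card_ksets_notin x).
rewrite -(cardsID [set S : {set T} | x \in S] [set S : {set T} | #|S| == k]).
have -> : [set S : {set T} | (#|S| == k) && (x \notin S)] =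
          [set S : {set T} | #|S| == k] :\: [set S : {set T} | x \in S].
  by apply/setP => S; rewrite !inE andbC.
by rewrite addnK; apply: eq_card => S; rewrite !inE.
Qed.

Lemma mul_bin_sub_down m k : m * ('C(m, k) - 'C(m.-1, k)) = k * 'C(m, k).
Proof.
rewrite mulnBr mul_bin_down -mulnBl.
have [km | mk] := leqP k m; first by rewrite subKn.
by rewrite bin_small ?muln0.
Qed.

Section PeelingStart.

Variables n m k : nat.
Local Notation mapping := {ffun 'I_n -> {set 'I_m}}.
Implicit Types (A : mapping) (i : 'I_n) (j : 'I_m).

Lemma peel_recovered_eq0 A :
  (forall j, ~~ pure A finset.set0 j) -> peel_recovered A = finset.set0.
Proof.
move=> not_pure; apply: iter_fix.
by rewrite /peel_step; case: pickP => // j; rewrite (negbTE (not_pure j)).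
Qed.

Definition pure_at j i : {set mapping} :=
  [set A | iblt_valid k A && (remaining A finset.set0 j == [set i])].

Lemma recover_some_sub_pure_at :
  [set A : mapping | iblt_valid k A && (peel_recovered A != finset.set0)] \subset
  \bigcup_(p : 'I_m * 'I_n) pure_at p.1 p.2.
Proof.
apply/fintype.subsetP => A; rewrite inE => /andP[validA recA].
have [j pure_j] : exists j, pure A finset.set0 j.
  apply/existsP; apply: contraNT recA; rewrite negb_exists => /forallP not_pure.
  by rewrite peel_recovered_eq0.
have /cards1P[i rem_i] := pure_j.
by apply/bigcupP; exists (j, i) => //; rewrite inE validA rem_i eqxx.
Qed.

Lemma pure_atE j i :
  pure_at j i = [set A : mapping | [forall i', A i' \in
    [set S : {set 'I_m} | (#|S| == k) && ((j \in S) == (i' == i))]]].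
Proof.
apply/setP => A; rewrite !inE.
apply/andP/forallP => [[/forallP cardA /eqP/setP remA] i' | famA].
  by have := remA i'; rewrite !inE cardA /= => ->.
split; first by apply/forallP => i'; have /[!inE] /andP[] := famA i'.
by apply/eqP/setP => i'; have /[!inE] /andP[_ /eqP] := famA i'.
Qed.

Lemma card_pure_at j i :
  #|pure_at j i| = ('C(m, k) - 'C(m.-1, k)) * 'C(m.-1, k) ^ n.-1.
Proof.
rewrite pure_atE card_ffun_family (bigD1 i) //= eqxx; congr (_ * _).
  have := card_ksets_in j k; rewrite card_ord => <-.
  by apply: eq_card => S; rewrite !inE eqb_id.
rewrite (eq_bigr (fun _ => 'C(m.-1, k))) => [|i' /negbTE ->].
  by rewrite prod_nat_const cardC1 card_ord.
have := card_ksets_notin j k; rewrite card_ord => <-.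
by apply: eq_card => S; rewrite !inE eqbF_neg.
Qed.

Lemma card_iblt_valid :
  #|[set A : mapping | iblt_valid k A]| = 'C(m, k) ^ n.
Proof.
have -> : [set A : mapping | iblt_valid k A] =
          [set A : mapping | [forall i, A i \in [set S : {set 'I_m} | #|S| == k]]].
  by apply/setP => A; rewrite !inE; apply: eq_forallb => i; rewrite inE.
by rewrite card_ffun_family prod_nat_const card_draws !card_ord.
Qed.

Lemma card_recover_some_le :
  #|[set A : mapping | iblt_valid k A && (peel_recovered A != finset.set0)]| <=
  n * k * 'C(m, k) * 'C(m.-1, k) ^ n.-1.
Proof.
apply: leq_trans (subset_leq_card recover_some_sub_pure_at) _.
apply: leq_trans (leq_card_bigcup _) _.
under eq_bigr do rewrite card_pure_at.
rewrite sum_nat_const card_prod !card_ord (mulnC m) -!mulnA.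
by rewrite [m * (_ * _)]mulnA mul_bin_sub_down !mulnA.
Qed.

End PeelingStart.

Local Open Scope ring_scope.

Lemma bin_pred_ratio (R : numFieldType) m k : (k <= m)%N ->
  'C(m.-1, k)%:R / 'C(m, k)%:R = 1 - k%:R / m%:R :> R.
Proof.
have [-> | m_gt0] := posnP m.
  by rewrite leqn0 => /eqP ->; rewrite !bin0 divr1 mul0r subr0.
move=> km; have /(congr1 (fun x => x%:R : R)) := mul_bin_down m k.
rewrite !natrM natrB // => mulC.
have Cne0 : 'C(m, k)%:R != 0 :> R by rewrite pnatr_eq0 -lt0n bin_gt0.
have mne0 : m%:R != 0 :> R by rewrite pnatr_eq0 -lt0n.
by apply: (mulfI mne0); rewrite mulrA mulC; field; rewrite mne0 Cne0.
Qed.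

Lemma bin_pred_ratio_le_expR (R : realType) m k : (k <= m)%N ->
  'C(m.-1, k)%:R / 'C(m, k)%:R <= expR (- (k%:R / m%:R)) :> R.
Proof. by move=> km; rewrite bin_pred_ratio //; apply: expR_ge1Dx. Qed.

Lemma prob_recover_some_le (R : realType) n m k : (k <= m)%N ->
  prob_recover_some R n m k <=
    (n * k)%:R * ('C(m.-1, k)%:R / 'C(m, k)%:R) ^+ n.-1.
Proof.
move=> km; rewrite /prob_recover_some card_iblt_valid.
have := card_recover_some_le n m k.
set b := 'C(m.-1, k); set c := 'C(m, k).
have c_gt0 : (0 < c)%N by rewrite bin_gt0.
case: n => [|n] /= card_le.
  by move: card_le; rewrite mul0n leqn0 => /eqP ->; rewrite mul0r.
rewrite ler_pdivrMr ?ltr0n ?expn_gt0 ?c_gt0 //.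
have -> : (n.+1 * k)%:R * (b%:R / c%:R) ^+ n * (c ^ n.+1)%:R =
          (n.+1 * k * c * b ^ n)%:R :> R.
  rewrite expr_div_n !natrM !natrX exprS -mulrA [_ / _ * _]mulrCA divfK ?mulrA //.
  by rewrite expf_neq0 // pnatr_eq0 -lt0n.
by rewrite ler_nat.
Qed.

Theorem theoremA1 (R : realType) (n m k : nat) (hk : (0 < k)%N) (hkm : (k <= m)%N) :
  prob_recover_some R n m k <=
    (n * k)%:R * expR (- ((k * (n - 1))%:R / m%:R)).
Proof.
apply: (le_trans (prob_recover_some_le R n hkm)).
rewrite ler_wpM2l // subn1 natrM mulrAC -mulNr [X in expR X]mulrC expRM_natl.
by apply: lerXn2r; rewrite ?nnegrE ?expR_ge0 ?divr_ge0 ?bin_pred_ratio_le_expR.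
Qed.
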